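(* Let $G$ be a group, and on the set $G$ define $a*b=b^{-1}ab$ (the conjugation quandle $\mathrm{Conj}(G)$) and $a\circ b=ba^{-1}b$ (the core quandle $\mathrm{Core}(G)$). Then for all $a,b,c\in G$, $$(a\circ b)*c=(a*c)\circ(b*c).$$ Moreover, if $g^2$ lies in the center of $G$ for every $g\in G$, then for all $a,b,c\in G$, $$(a*b)\circ c=(a\circ c)*(b\circ c).$$ *)

Record group := Group {
  gcar :> Type;
  gmul : gcar -> gcar -> gcar;
  gone : gcar;
  ginv : gcar -> gcar;
  gmulA : forall x y z, gmul x (gmul y z) = gmul (gmul x y) z;
  gmul1l : forall x, gmul gone x = x;
  gmulVl : forall x, gmul (ginv x) x = gone
}.

Definition conj_op (G : group) (a b : G) : G := gmul G (gmul G (ginv G b) a) b.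

Definition core_op (G : group) (a b : G) : G := gmul G (gmul G b (ginv G a)) b.

Definition in_center (G : group) (z : G) : Prop := forall x : G, gmul G z x = gmul G x z.


(* Conjugation by [c] is a group automorphism and [a o b = b a^-1 b] is a
   word in the group operations, so conjugation preserves the core operation.
   When squares are central, [a o c = (c^-1 a^-1 c) c^2] is a conjugate of
   [a^-1] up to the central factor [c^2], conjugation by [b] and by [b^-1]
   coincide, and the second identity reduces to the self-distributivity of
   conjugation. *)

Local Notation "x * y" := (gmul _ x y).
Local Notation "x ^-1" := (ginv _ x) (at level 2, format "x ^-1").

Section GroupFacts.

Context {G : group}.
Implicit Types x y : G.

Lemma mulgV x : x * x^-1 = gone G.
Proof.
transitivity ((x^-1)^-1 * x^-1 * (x * x^-1)).
- rewrite gmulVl, gmul1l; reflexivity.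
- rewrite <- gmulA, (gmulA G x^-1 x), gmulVl, gmul1l; apply gmulVl.
Qed.

Lemma mulg1 x : x * gone G = x.
Proof. rewrite <- (gmulVl G x), gmulA, mulgV, gmul1l; reflexivity. Qed.

Lemma mulKg x y : x^-1 * (x * y) = y.
Proof. rewrite gmulA, gmulVl, gmul1l; reflexivity. Qed.

Lemma mulKVg x y : x * (x^-1 * y) = y.
Proof. rewrite gmulA, mulgV, gmul1l; reflexivity. Qed.

Lemma mulIg x y z : x * y = x * z -> y = z.
Proof. intros E; rewrite <- (mulKg x y), E, mulKg; reflexivity. Qed.

Lemma invg_unique x y : x * y = gone G -> y = x^-1.
Proof. intros E; apply (mulIg x); rewrite E, mulgV; reflexivity. Qed.

Lemma invMg x y : (x * y)^-1 = y^-1 * x^-1.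
Proof.
symmetry; apply invg_unique; rewrite <- gmulA, mulKVg, mulgV; reflexivity.
Qed.

End GroupFacts.

Section Morphisms.

Context {G H : group}.
Variable f : G -> H.
Hypothesis fM : forall x y : G, f (x * y) = f x * f y.

Lemma morph1 : f (gone G) = gone H.
Proof.
apply (mulIg (f (gone G))); rewrite <- fM, !gmul1l, mulg1; reflexivity.
Qed.

Lemma morphV x : f x^-1 = (f x)^-1.
Proof. apply invg_unique; rewrite <- fM, mulgV; apply morph1. Qed.

Lemma morph_conj_op a b : f (conj_op G a b) = conj_op H (f a) (f b).
Proof. unfold conj_op; rewrite !fM, morphV; reflexivity. Qed.

Lemma morph_core_op a b : f (core_op G a b) = core_op H (f a) (f b).
Proof. unfold core_op; rewrite !fM, morphV; reflexivity. Qed.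

End Morphisms.

Section Conjugation.

Context {G : group}.
Implicit Types a b c u w x y z : G.

Lemma conj_opMl x y c : conj_op G (x * y) c = conj_op G x c * conj_op G y c.
Proof. unfold conj_op; rewrite <- !gmulA, mulKVg; reflexivity. Qed.

Lemma conj_op_conj x y c :
  conj_op G (conj_op G x y) c = conj_op G (conj_op G x c) (conj_op G y c).
Proof.
exact (morph_conj_op (fun g => conj_op G g c) (fun u v => conj_opMl u v c) x y).
Qed.

Lemma conj_op_inv x c : conj_op G x^-1 c = (conj_op G x c)^-1.
Proof. exact (morphV (fun g => conj_op G g c) (fun u v => conj_opMl u v c) x). Qed.

Lemma conj_op_centrall z w : in_center G z -> conj_op G z w = z.
Proof.
intros Hz; unfold conj_op; rewrite <- Hz, <- gmulA, gmulVl, mulg1; reflexivity.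
Qed.

Lemma conj_op_mull_central x z w :
  in_center G z -> conj_op G (x * z) w = conj_op G x w * z.
Proof. intros Hz; rewrite conj_opMl, (conj_op_centrall z w Hz); reflexivity. Qed.

Lemma conj_opMr y u w : conj_op G y (u * w) = conj_op G (conj_op G y u) w.
Proof. unfold conj_op; rewrite invMg, !gmulA; reflexivity. Qed.

Lemma conj_op_centralr x z : in_center G z -> conj_op G x z = x.
Proof. intros Hz; unfold conj_op; rewrite <- gmulA, <- Hz, mulKg; reflexivity. Qed.

Lemma conj_op_mulr_central y u z :
  in_center G z -> conj_op G y (u * z) = conj_op G y u.
Proof. intros Hz; rewrite conj_opMr, (conj_op_centralr _ z Hz); reflexivity. Qed.

Lemma conj_op_core_op a b c :
  conj_op G (core_op G a b) c = core_op G (conj_op G a c) (conj_op G b c).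
Proof.
exact (morph_core_op (fun g => conj_op G g c) (fun u v => conj_opMl u v c) a b).
Qed.

End Conjugation.

Section CentralSquares.

Context {G : group}.
Hypothesis sq_central : forall g : G, in_center G (g * g).
Implicit Types a b c y : G.

Lemma conj_op_invr y b : conj_op G y b^-1 = conj_op G y b.
Proof.
rewrite <- (conj_op_mulr_central y b^-1 (b * b) (sq_central b)), mulKg.
reflexivity.
Qed.

Lemma core_op_sq_central a c : core_op G a c = conj_op G a^-1 c * (c * c).
Proof.
unfold core_op, conj_op; rewrite <- (sq_central c), <- !gmulA, mulKVg.
reflexivity.
Qed.

Lemma core_op_conj_op a b c :
  core_op G (conj_op G a b) c = conj_op G (core_op G a c) (core_op G b c).
Proof.
rewrite !core_op_sq_central, conj_op_mull_central, conj_op_mulr_central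
  by apply sq_central.
rewrite <- conj_op_inv, <- (conj_op_invr a^-1 b), conj_op_conj.
reflexivity.
Qed.

End CentralSquares.

Theorem proposition4p17 (G : group) :
  (forall a b c : G, conj_op G (core_op G a b) c = core_op G (conj_op G a c) (conj_op G b c)) /\
  ((forall g : G, in_center G (gmul G g g)) ->
   forall a b c : G, core_op G (conj_op G a b) c = conj_op G (core_op G a c) (core_op G b c)).
Proof.
split.
- exact conj_op_core_op.
- intros sq_central; exact (core_op_conj_op sq_central).
Qed.
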